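(* There exists an absolute constant $K<\infty$ such that for any C$^\ast$-algebras $\mathcal{A}$, $\mathcal{B}$ with $\mathcal{A}$ unital, any $\varepsilon\ge0$ and any self-adjoint (i.e. $\psi(x^\ast)=\psi(x)^\ast$) $\varepsilon$-order zero bounded linear map $\psi\colon\mathcal{A}\to\mathcal{B}$ with $h:=\psi(1_{\mathcal{A}})$, at least one of the following holds: (a) $\|\psi\|\le\sqrt{(K+2)^5\varepsilon}$; (b) $\|\psi\|\le(K+2)^5\|h\|$.
   Context: $x\perp y$ means $xy=yx=x^\ast y=xy^\ast=0$; $\psi$ is $\varepsilon$-order zero if $\|\psi(x)\psi(y)\|\le\varepsilon\|x\|\|y\|$ for all positive $x,y$ with $x\perp y$. *)

From HB Require Import structures.
From mathcomp Require Import all_boot all_order all_algebra.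
From mathcomp Require Import complex.
From mathcomp Require Import all_classical all_reals all_analysis.
Set Implicit Arguments. Unset Strict Implicit. Unset Printing Implicit Defensive.
Import Order.TTheory GRing.Theory Num.Theory.
Import numFieldNormedType.Exports.
Local Open Scope ring_scope.
Local Open Scope complex_scope.

(* Real-valued norm on a normed space over the complex numbers R[i]
   (the norm takes values in R[i] and is real nonnegative; we take its real part). *)
Definition rnorm (R : realType) (V : normedModType R[i]) (x : V) : R :=
  complex.Re `|x|.

Record is_Cstar_algebra (R : realType) (A : completeNormedModType R[i])
    (mul : A -> A -> A) (star : A -> A) : Prop := {
  cs_mulA : forall x y z, mul x (mul y z) = mul (mul x y) z;
  cs_mulDl : forall x y z, mul (x + y) z = mul x z + mul y z;
  cs_mulDr : forall x y z, mul x (y + z) = mul x y + mul x z;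
  cs_mulZl : forall (a : R[i]) x y, mul (a *: x) y = a *: mul x y;
  cs_mulZr : forall (a : R[i]) x y, mul x (a *: y) = a *: mul x y;
  cs_norm_mul : forall x y, rnorm (mul x y) <= rnorm x * rnorm y;
  cs_starD : forall x y, star (x + y) = star x + star y;
  cs_starZ : forall (a : R[i]) x, star (a *: x) = (a^*)%C *: star x;
  cs_starK : forall x, star (star x) = x;
  cs_star_mul : forall x y, star (mul x y) = mul (star y) (star x);
  cs_Cstar : forall x, rnorm (mul (star x) x) = rnorm x ^+ 2
}.

Definition is_unit_elt (T : Type) (mul : T -> T -> T) (one : T) : Prop :=
  forall x, mul one x = x /\ mul x one = x.

Definition is_positive (T : Type) (mul : T -> T -> T) (star : T -> T) (x : T) : Prop :=
  exists z, x = mul (star z) z.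

Definition orthogonal (T : zmodType) (mul : T -> T -> T) (star : T -> T) (x y : T) : Prop :=
  mul x y = 0 /\ mul y x = 0 /\ mul (star x) y = 0 /\ mul x (star y) = 0.

Definition is_Clinear (R : realType) (U V : normedModType R[i]) (f : U -> V) : Prop :=
  forall (a : R[i]) x y, f (a *: x + y) = a *: f x + f y.

Definition is_bounded_map (R : realType) (U V : normedModType R[i]) (f : U -> V) : Prop :=
  exists M : R, forall x, rnorm (f x) <= M * rnorm x.

Definition opnorm (R : realType) (U V : normedModType R[i]) (f : U -> V) : R :=
  sup [set r : R | exists x : U, rnorm x <= 1 /\ r = rnorm (f x)].

Definition eps_order_zero (R : realType) (A B : normedModType R[i])
    (mulA : A -> A -> A) (starA : A -> A) (mulB : B -> B -> B)
    (eps : R) (psi : A -> B) : Prop :=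
  forall x y, is_positive mulA starA x -> is_positive mulA starA y ->
    orthogonal mulA starA x y ->
    rnorm (mulB (psi x) (psi y)) <= eps * rnorm x * rnorm y.

From Pilot Require Import Defs.
From HB Require Import structures.
From mathcomp Require Import all_boot all_order all_algebra.
From mathcomp Require Import complex.
From mathcomp Require Import all_classical all_reals all_analysis.
From mathcomp Require Import ring lra.
Set Implicit Arguments. Unset Strict Implicit. Unset Printing Implicit Defensive.
Import Order.TTheory GRing.Theory Num.Theory.
Import numFieldNormedType.Exports.
Local Open Scope ring_scope.

(* Let N be the supremum of the norms of psi b over self-adjoint contractions b;
   splitting x into its real and imaginary parts gives |psi| <= 2N.  For a
   self-adjoint contraction a, square roots built by the iteration
   z |-> (t + z^2)/2 give c = |a|, commuting with a, so u = (c+a)^2 and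
   v = (c-a)^2 are orthogonal positive elements of norm <= 4 with u - v = 4ca
   and u + v = 4a^2.  The C*-identity bounds |psi u - psi v|^2 by
   |psi u + psi v|^2 + 2(|psi u psi v| + |psi v psi u|), so the eps-order zero
   hypothesis yields |psi(ca)|^2 <= |psi(a^2)|^2 + 4 eps.  Since 2a^2 - 1 is a
   self-adjoint contraction, 2|psi(a^2)| <= N + |h|, and |a(1-c)| <= 1/4 gives
   |psi(a(1-c))| <= N/4.  Writing a = a(1-c) + ca we get
   N <= N/4 + sqrt(((N+|h|)/2)^2 + 4 eps), which forces 2N <= sqrt(243 eps) or
   2N <= 243|h|: the claim with K = 1. *)

Section RealNorm.
Variables (R : realType) (V : normedModType R[i]).
Implicit Types x y : V.

Lemma rnormE x : `|x| = (rnorm x)%:C%C.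
Proof. by rewrite /rnorm RRe_real // ger0_real. Qed.

Lemma rnorm_ge0 x : 0 <= rnorm x.
Proof. by rewrite -ler0c -rnormE. Qed.

Lemma rnormD x y : rnorm (x + y) <= rnorm x + rnorm y.
Proof. by rewrite -lecR rmorphD /= -!rnormE ler_normD. Qed.

Lemma rnormB x y : rnorm (x - y) <= rnorm x + rnorm y.
Proof. by rewrite -lecR rmorphD /= -!rnormE ler_normB. Qed.

Lemma rdistC x y : rnorm (x - y) = rnorm (y - x).
Proof. by rewrite /rnorm distrC. Qed.

Lemma rnorm0 : rnorm (0 : V) = 0.
Proof. by rewrite /rnorm normr0. Qed.

Lemma rnorm_eq0 x : rnorm x = 0 -> x = 0.
Proof. by move=> x0; apply/normr0_eq0; rewrite rnormE x0. Qed.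

Lemma rnormMn x n : rnorm (x *+ n) = rnorm x *+ n.
Proof. by apply: complexI; rewrite rmorphMn /= -!rnormE normrMn. Qed.

Lemma rnormZr (k : R) x : rnorm (k%:C%C *: x) = `|k| * rnorm x.
Proof.
apply: complexI; rewrite rmorphM /= -!rnormE normrZ normc_def /=.
by rewrite expr0n addr0 sqrtr_sqr.
Qed.

Lemma rnormZi x : rnorm ('i%C *: x) = rnorm x.
Proof.
apply: complexI; rewrite -!rnormE normrZ normc_def /=.
by rewrite expr0n add0r expr1n sqrtr1 mul1r.
Qed.

Lemma rnormZhalf x : rnorm ((2^-1 : R)%:C%C *: x) = rnorm x / 2.
Proof. by rewrite rnormZr ger0_norm ?invr_ge0 ?ler0n // mulrC. Qed.

Lemma rnorm_small_eq0 (C : R) x :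
  0 <= C -> (forall e, 0 < e -> rnorm x <= C * e) -> x = 0.
Proof.
move=> C0 small; apply: rnorm_eq0; apply/le_anti; rewrite rnorm_ge0 andbT.
apply/ler_addgt0Pr => e e0; rewrite add0r.
have e1 : 0 < e / (C + 1) by apply: divr_gt0 => //; lra.
apply: (le_trans (small _ e1)); rewrite mulrA ler_pdivrMr; last lra.
by rewrite mulrC ler_pM2l //; lra.
Qed.

End RealNorm.

Lemma majorized_increments_cvg (R : realType) (V : completeNormedModType R[i])
    (u : nat -> V) (w : nat -> R) :
  nondecreasing_seq w -> has_ubound (range w)%classic ->
  (forall n m, (n <= m)%N -> rnorm (u m - u n) <= w m - w n) ->
  exists l, forall e, 0 < e -> exists K, forall n, (K <= n)%N -> rnorm (l - u n) <= e.
Proof.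
move=> w_nd w_ub u_inc.
have w_cvg := nondecreasing_cvgn w_nd w_ub.
have w_le n : w n <= sup (range w)%classic by apply: ub_le_sup => //; exists n.
have u_cauchy e : 0 < e ->
    exists K, forall n m, (K <= n)%N -> (n <= m)%N -> rnorm (u m - u n) < e.
  move=> e0; have [K _ wK] := cvgr_dist_lt _ _ w_cvg _ e0.
  exists K => n m Kn nm; apply: (le_lt_trans (u_inc _ _ nm)).
  by have := wK _ Kn; have := w_le m; rewrite ger0_norm ?subr_ge0 //; lra.
have u_cvg : cvgn u.
  apply: cauchy_cvg; apply: cauchy_exP => e e0.
  have e0' : 0 < complex.Re e by move: e0; rewrite ltcE => /andP[].
  have [K uK] := u_cauchy _ e0'.
  exists (u K), K => // n /= Kn.
  rewrite -ball_normE /ball_ /= -(RRe_real (gtr0_real e0)) rnormE ltcR rdistC.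
  exact: uK.
exists (limn u) => e e0.
have e0' : 0 < e%:C%C by rewrite ltcR.
have [K _ uK] := cvgr_dist_le _ _ u_cvg _ e0'.
by exists K => n /uK; rewrite rnormE lecR.
Qed.

Lemma morphD_zmod_morphism (U V : zmodType) (f : U -> V) :
  {morph f : x y / x + y} -> zmod_morphism f.
Proof.
move=> fD; have f0 : f 0 = 0 by apply: (addrI (f 0)); rewrite -fD !addr0.
move=> x y; rewrite fD; congr (_ + _).
by apply: (addrI (f y)); rewrite -fD !subrr.
Qed.

Section CstarAlgebra.
Variables (R : realType) (A : completeNormedModType R[i]).
Variables (mul : A -> A -> A) (star : A -> A).
Hypothesis HA : is_Cstar_algebra mul star.

Lemma cs_mulBl z : {morph mul^~ z : x y / x - y}.
Proof. exact: morphD_zmod_morphism (fun x y => cs_mulDl HA x y z). Qed.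

Lemma cs_mulBr x : {morph mul x : y z / y - z}.
Proof. exact: morphD_zmod_morphism (cs_mulDr HA x). Qed.

Lemma cs_starB : {morph star : x y / x - y}.
Proof. exact: morphD_zmod_morphism (cs_starD HA). Qed.

Lemma cs_rnorm_star x : rnorm (star x) = rnorm x.
Proof.
have le y : rnorm (star y) <= rnorm y.
  have [->|nz] := eqVneq (rnorm (star y)) 0; first exact: rnorm_ge0.
  have pos : 0 < rnorm (star y) by rewrite lt_def nz rnorm_ge0.
  rewrite -(ler_pM2l pos) -expr2 -(cs_Cstar HA) (cs_starK HA) [_ * rnorm y]mulrC.
  exact: (cs_norm_mul HA y (star y)).
by apply/le_anti; rewrite le -{1}(cs_starK HA x) le.
Qed.

Lemma cs_sa_rnormB_sqr u v : star u = u -> star v = v ->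
  rnorm (u - v) ^+ 2 <= rnorm (u + v) ^+ 2 + (rnorm (mul u v) + rnorm (mul v u)) *+ 2.
Proof.
move=> su sv.
have sa_sqr w : star w = w -> rnorm w ^+ 2 = rnorm (mul w w).
  by move=> sw; rewrite -(cs_Cstar HA) sw.
rewrite !sa_sqr ?cs_starB ?(cs_starD HA) ?su ?sv //.
have -> : mul (u - v) (u - v) = mul (u + v) (u + v) - (mul u v + mul v u) *+ 2.
  rewrite cs_mulBl !cs_mulBr !(cs_mulDl HA) !(cs_mulDr HA).
  move: (mul u u) (mul u v) (mul v u) (mul v v) => p q r s.
  rewrite opprB addrACA -opprD (addrC r s) addrACA.
  by move: (p + s) (q + r) => X Y; rewrite mulr2n opprD addrA addrK.
apply: (le_trans (rnormB _ _)); rewrite rnormMn lerD2l lerMn2r /=.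
exact: rnormD.
Qed.

End CstarAlgebra.

Section CommutingSquares.
Variable T : pzRingType.
Implicit Types x y : T.

Lemma sqrrD_comm x y : GRing.comm x y -> (x + y) ^+ 2 = x ^+ 2 + y ^+ 2 + x * y *+ 2.
Proof.
by move=> cxy; rewrite exprDn_comm // !big_ord_recr big_ord0 /= add0r mulr1 mul1r addrAC.
Qed.

Lemma sqrrB_comm x y : GRing.comm x y -> (x - y) ^+ 2 = x ^+ 2 + y ^+ 2 - x * y *+ 2.
Proof. by move=> cxy; rewrite sqrrD_comm ?sqrrN ?mulrN ?mulNrn //; apply: commrN. Qed.

Lemma subr_sqrDB_comm x y : GRing.comm x y -> (x + y) ^+ 2 - (x - y) ^+ 2 = x * y *+ 4.
Proof.
move=> cxy; rewrite sqrrD_comm // sqrrB_comm // opprB addrC addrA subrK.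
by rewrite -mulr2n -mulrnA.
Qed.

Lemma addr_sqrDB_comm x y : GRing.comm x y ->
  (x + y) ^+ 2 + (x - y) ^+ 2 = (x ^+ 2 + y ^+ 2) *+ 2.
Proof.
by move=> cxy; rewrite sqrrD_comm // sqrrB_comm // addrACA subrr addr0 mulr2n.
Qed.

Lemma mulrDB_comm x y : GRing.comm x y -> (x + y) * (x - y) = x ^+ 2 - y ^+ 2.
Proof. by move=> cxy; rewrite mulrDl !mulrBr -cxy addrA subrK. Qed.

End CommutingSquares.

Section SqrtMajorant.
Variable R : realFieldType.

Fixpoint sqrt_majorant (n : nat) : R :=
  if n is m.+1 then (1 + sqrt_majorant m ^+ 2) / 2 else 0.

Lemma sqrt_majorant_ge0_le1 n : 0 <= sqrt_majorant n <= 1.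
Proof.
elim: n => [|n /andP[z0 z1]] /=; first by rewrite lexx ler01.
by rewrite divr_ge0 ?ler_pdivrMr /=; nra.
Qed.

Lemma sqrt_majorant_nondecreasing : nondecreasing_seq sqrt_majorant.
Proof.
apply/nondecreasing_seqP => n; rewrite [sqrt_majorant n.+1]/= ler_pdivlMr //.
by have := sqr_ge0 (sqrt_majorant n - 1); rewrite sqrrB1; lra.
Qed.

End SqrtMajorant.

Lemma self_bound_dichotomy (R : rcfType) (N h eps : R) : 0 <= N -> 0 <= h -> 0 <= eps ->
  N <= N / 4 + Num.sqrt (((N + h) / 2) ^+ 2 + 4 * eps) ->
  N *+ 2 <= Num.sqrt (243 * eps) \/ N *+ 2 <= 243 * h.
Proof.
move=> N0 h0 eps0; set s := Num.sqrt _ => Ns.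
have s0 : 0 <= s := sqrtr_ge0 _.
have s2 : s ^+ 2 = ((N + h) / 2) ^+ 2 + 4 * eps.
  by rewrite sqr_sqrtr // addr_ge0 ?sqr_ge0 ?mulr_ge0.
have [Nh|hN] := leP N (4 * h); [right; lra | left].
have N2 : 0 <= N *+ 2 by rewrite mulrn_wge0.
rewrite -(ger0_norm N2) -sqrtr_sqr; apply: ler_wsqrtr.
rewrite mulr2n; nra.
Qed.

Section UnitalCstarAlgebra.
Variables (R : realType) (A : completeNormedModType R[i]).
Variables (mul : A -> A -> A) (star : A -> A) (one : A).
Hypotheses (HA : is_Cstar_algebra mul star) (Hone : is_unit_elt mul one).

HB.instance Definition _ := GRing.Zmodule_isPzRing.Build A
  (cs_mulA HA) (fun x => (Hone x).1) (fun x => (Hone x).2) (cs_mulDl HA) (cs_mulDr HA).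
HB.instance Definition _ := GRing.isZmodMorphism.Build A A star (cs_starB HA).

Implicit Types a c x y z : A.

Lemma cs_scalerAl (a : R[i]) x y : a *: (x * y) = (a *: x) * y.
Proof. exact: esym (cs_mulZl HA a x y). Qed.

Lemma cs_scalerAr (a : R[i]) x y : a *: (x * y) = x * (a *: y).
Proof. exact: esym (cs_mulZr HA a x y). Qed.

Lemma starM x y : star (x * y) = star y * star x.
Proof. exact: (cs_star_mul HA x y). Qed.

Lemma starZ (a : R[i]) x : star (a *: x) = (a^*)%C *: star x.
Proof. exact: (cs_starZ HA a x). Qed.

Lemma starK : involutive star.
Proof. exact: (cs_starK HA). Qed.

Lemma star1 : star 1 = 1.
Proof. by rewrite -[star 1]mulr1 -[X in _ * X](starK 1) -starM mulr1 starK. Qed.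

Lemma rnormM x y : rnorm (x * y) <= rnorm x * rnorm y.
Proof. exact: (cs_norm_mul HA x y). Qed.

Lemma rnorm_Cstar x : rnorm (star x * x) = rnorm x ^+ 2.
Proof. exact: (cs_Cstar HA x). Qed.

Lemma rnorm_sa_sqr x : star x = x -> rnorm (x * x) = rnorm x ^+ 2.
Proof. by move=> sx; rewrite -rnorm_Cstar sx. Qed.

Lemma rnorm_sa_sqr_le1 x : star x = x -> rnorm x <= 1 -> rnorm (x * x) <= 1.
Proof. by move=> sx x1; rewrite rnorm_sa_sqr // expr_le1 // rnorm_ge0. Qed.

Lemma rnorm1_le1 : rnorm (1 : A) <= 1.
Proof.
have [->|nz] := eqVneq (rnorm (1 : A)) 0; first exact: ler01.
have pos : 0 < rnorm (1 : A) by rewrite lt_def nz rnorm_ge0.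
by rewrite -(ler_pM2l pos) -expr2 -rnorm_sa_sqr ?star1 // mulr1 mulr1.
Qed.

Lemma conjc_i : ('i%C : R[i])^*%C = - 'i%C.
Proof. by apply/eqP; rewrite eq_complex /= oppr0 !eqxx. Qed.

Lemma mulcii : 'i%C * 'i%C = -1 :> R[i].
Proof. by rewrite -expr2 sqr_i. Qed.

(* [w = x + i y] satisfies [w^* w = 1], hence [|w|^2 = |w^* w| <= 1]. *)
Lemma rnorm_cos_add_isin_le1 x y : star x = x -> star y = y -> x * y = y * x ->
  x * x + y * y = 1 -> rnorm (x + 'i%C *: y) <= 1.
Proof.
move=> sx sy cxy xy1; rewrite -(expr_le1 (n := 2)) ?rnorm_ge0 //.
rewrite -rnorm_Cstar raddfD /= starZ sx sy conjc_i mulrDl !mulrDr.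
rewrite -!cs_scalerAl -!cs_scalerAr scalerA cxy mulNr mulcii opprK scale1r.
by rewrite scaleNr addrA addrK xy1 rnorm1_le1.
Qed.

Lemma rnorm_re_im_le1 x y : star x = x -> star y = y -> rnorm (x + 'i%C *: y) <= 1 ->
  rnorm x <= 1 /\ rnorm y <= 1.
Proof.
move=> sx sy w1.
have w1' : rnorm (x - 'i%C *: y) <= 1.
  by rewrite -(cs_rnorm_star HA) raddfB /= starZ sx sy conjc_i scaleNr opprK.
have x2 : x *+ 2 = (x + 'i%C *: y) + (x - 'i%C *: y).
  by rewrite addrACA subrr addr0 mulr2n.
have y2 : ('i%C *: y) *+ 2 = (x + 'i%C *: y) - (x - 'i%C *: y).
  by rewrite opprB addrC addrA subrK mulr2n.
have := rnormD (x + 'i%C *: y) (x - 'i%C *: y).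
have := rnormB (x + 'i%C *: y) (x - 'i%C *: y).
by rewrite -x2 -y2 !rnormMn rnormZi !mulr2n; lra.
Qed.

Lemma cos_sin_le1 x y : star x = x -> star y = y -> x * y = y * x -> x * x + y * y = 1 ->
  [/\ rnorm x <= 1, rnorm y <= 1, rnorm (x * x - y * y) <= 1 & rnorm (x * y *+ 2) <= 1].
Proof.
move=> sx sy cxy xy1.
have w1 := rnorm_cos_add_isin_le1 sx sy cxy xy1.
have [x1 y1] := rnorm_re_im_le1 sx sy w1.
have sX : star (x * x - y * y) = x * x - y * y by rewrite raddfB /= !starM sx sy.
have sY : star (x * y *+ 2) = x * y *+ 2 by rewrite raddfMn /= starM sx sy cxy.
have w_sqr : (x + 'i%C *: y) * (x + 'i%C *: y) = (x * x - y * y) + 'i%C *: (x * y *+ 2).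
  rewrite mulrDl !mulrDr -!cs_scalerAl -!cs_scalerAr scalerA mulcii scaleN1r -cxy.
  by rewrite -scalerMnr mulr2n [_ - y * y]addrC addrACA.
have w_sqr1 : rnorm ((x * x - y * y) + 'i%C *: (x * y *+ 2)) <= 1.
  rewrite -w_sqr; apply: (le_trans (rnormM _ _)).
  by apply: mulr_ile1; rewrite ?rnorm_ge0.
by have [] := rnorm_re_im_le1 sX sY w_sqr1.
Qed.

Local Notation half := ((2^-1 : R)%:C%C).
Local Notation zeta := (@sqrt_majorant R).

Section SquareRoot.
Variable t : A.
Hypothesis t1 : rnorm t <= 1.

(* [sqrt_iter n] tends to the fixed point [l] of [l = (t + l ^+ 2) / 2], and
   [1 - l] is a square root of [1 - t]; [zeta] is the same iteration for the
   scalar [t = 1], which majorizes the norms and the increments. *)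
Fixpoint sqrt_iter n : A :=
  if n is m.+1 then half *: (t + sqrt_iter m * sqrt_iter m) else 0.

Local Notation z := sqrt_iter.

Lemma sqrt_iterS_twice n : z n.+1 *+ 2 = t + z n * z n.
Proof.
by rewrite /= scalerMnl -rmorphMn /= -mulr_natr mulVf ?pnatr_eq0 // scale1r.
Qed.

Lemma sqrt_iter_norm n : rnorm (z n) <= zeta n.
Proof.
elim: n => [|n IH] /=; first by rewrite rnorm0.
rewrite rnormZhalf ler_pM2r ?invr_gt0 ?ltr0n //.
apply: (le_trans (rnormD _ _)); apply: lerD => //.
by apply: (le_trans (rnormM _ _)); rewrite expr2 ler_pM ?rnorm_ge0.
Qed.

Lemma sqrt_iter_le1 n : rnorm (z n) <= 1.
Proof. exact: le_trans (sqrt_iter_norm n) (andP (sqrt_majorant_ge0_le1 R n)).2. Qed.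

Lemma sqrt_iter_step n : rnorm (z n.+1 - z n) <= zeta n.+1 - zeta n.
Proof.
elim: n => [|n IH].
  rewrite /= subr0 mul0r addr0 rnormZhalf expr0n /= addr0 subr0.
  by rewrite ler_pM2r ?invr_gt0 ?ltr0n.
set d := z n.+1 - z n in IH *.
have -> : z n.+2 - z n.+1 = half *: (z n.+1 * d + d * z n).
  rewrite [z n.+2]/= [z n.+1 in X in _ - X]/= -scalerBr /d; congr (_ *: _).
  by rewrite mulrBr mulrBl addrA subrK opprD addrACA subrr add0r.
have -> : zeta n.+2 - zeta n.+1 = (zeta n.+1 ^+ 2 - zeta n ^+ 2) / 2.
  by rewrite /=; field.
rewrite rnormZhalf ler_pM2r ?invr_gt0 ?ltr0n //.
have /andP[zeta0 _] := sqrt_majorant_ge0_le1 R n.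
have /andP[zeta1 _] := sqrt_majorant_ge0_le1 R n.+1.
have b1 := ler_pM (rnorm_ge0 _) (rnorm_ge0 _) (sqrt_iter_norm n.+1) IH.
have b2 := ler_pM (rnorm_ge0 _) (rnorm_ge0 _) IH (sqrt_iter_norm n).
apply: (le_trans (rnormD _ _)); apply: (le_trans (lerD (rnormM _ _) (rnormM _ _))).
by apply: (le_trans (lerD b1 b2)); nra.
Qed.

Lemma sqrt_iter_cauchy n m : (n <= m)%N -> rnorm (z m - z n) <= zeta m - zeta n.
Proof.
elim: m => [|m IH]; first by rewrite leqn0 => /eqP->; rewrite !subrr rnorm0.
rewrite leq_eqVlt => /orP[/eqP->|]; first by rewrite !subrr rnorm0.
rewrite ltnS => /IH nm.
rewrite -(subrK (z m) (z m.+1)) -addrA.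
by apply: (le_trans (rnormD _ _)); have := sqrt_iter_step m; lra.
Qed.

Lemma sqrt_iter_star n : star t = t -> star (z n) = z n.
Proof.
move=> st; elim: n => [|n IH] /=; first by rewrite raddf0.
by rewrite starZ conjc_real raddfD /= starM IH st.
Qed.

Lemma sqrt_iter_comm y n : y * t = t * y -> y * z n = z n * y.
Proof.
move=> yt; elim: n => [|n IH] /=; first by rewrite mulr0 mul0r.
rewrite -cs_scalerAr -cs_scalerAl; congr (_ *: _).
by rewrite mulrDr mulrDl yt mulrA IH -!mulrA IH.
Qed.

Section Limit.
Variable l : A.
Hypothesis sqrt_iter_lim :
  forall e, 0 < e -> exists K, forall n, (K <= n)%N -> rnorm (l - z n) <= e.

Lemma sqrt_lim_le1 : rnorm l <= 1.
Proof.
apply/ler_addgt0Pr => e e0; have [K lK] := sqrt_iter_lim e0.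
rewrite -(subrK (z K) l); apply: (le_trans (rnormD _ _)).
by have := lK K (leqnn K); have := sqrt_iter_le1 K; lra.
Qed.

Lemma sqrt_lim_fix : l *+ 2 = t + l * l.
Proof.
apply/eqP; rewrite -subr_eq0; apply/eqP; apply: (@rnorm_small_eq0 _ _ 4) => // e e0.
have [K lK] := sqrt_iter_lim e0.
have -> : l *+ 2 - (t + l * l) = (l - z K.+1) *+ 2 + (z K * (z K - l) + (z K - l) * l).
  rewrite mulrBr mulrBl [X in (_ - z K.+1) *+ 2 + X]addrA subrK mulrnBl sqrt_iterS_twice.
  by rewrite !opprD !addrA subrK.
have b1 : rnorm (z K * (z K - l)) <= e.
  apply: (le_trans (rnormM _ _)); rewrite rdistC -[e]mul1r.
  by rewrite ler_pM ?rnorm_ge0 ?sqrt_iter_le1 ?lK.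
have b2 : rnorm ((z K - l) * l) <= e.
  apply: (le_trans (rnormM _ _)); rewrite rdistC -[e]mulr1.
  by rewrite ler_pM ?rnorm_ge0 ?sqrt_lim_le1 ?lK.
apply: (le_trans (rnormD _ _)); apply: (le_trans (lerD (lexx _) (rnormD _ _))).
by have := lK K.+1 (leqnSn K); rewrite rnormMn mulr2n; lra.
Qed.

Lemma sqrt_lim_comm y : y * t = t * y -> y * l = l * y.
Proof.
move=> yt; apply/eqP; rewrite -subr_eq0; apply/eqP.
apply: (@rnorm_small_eq0 _ _ (rnorm y *+ 2)) => [|e e0].
  by rewrite mulrn_wge0 ?rnorm_ge0.
have [K lK] := sqrt_iter_lim e0.
have -> : y * l - l * y = y * (l - z K) + (z K - l) * y.
  by rewrite mulrBr mulrBl (sqrt_iter_comm K yt) addrA subrK.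
apply: (le_trans (rnormD _ _)); apply: (le_trans (lerD (rnormM _ _) (rnormM _ _))).
have := ler_wpM2l (rnorm_ge0 y) (lK K (leqnn K)).
by rewrite rdistC mulr2n mulrDl [_ * rnorm y]mulrC; lra.
Qed.

Lemma sqrt_lim_star : star t = t -> star l = l.
Proof.
move=> st; apply/eqP; rewrite -subr_eq0; apply/eqP.
apply: (@rnorm_small_eq0 _ _ 2) => // e e0.
have [K lK] := sqrt_iter_lim e0.
have -> : star l - l = star (l - z K) + (z K - l).
  by rewrite raddfB /= sqrt_iter_star // addrA subrK.
apply: (le_trans (rnormD _ _)); rewrite (cs_rnorm_star HA) [rnorm (z K - l)]rdistC.
by have := lK K (leqnn K); lra.
Qed.

End Limit.

(* The second conjunct records that [s] is positive. *)
Lemma sqrt_one_sub : exists s, [/\ s * s = 1 - t, rnorm (1 - s) <= 1,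
  (forall y, y * t = t * y -> y * s = s * y) & (star t = t -> star s = s)].
Proof.
have zeta_ub : has_ubound (range zeta)%classic.
  by exists 1 => _ [n _ <-]; case/andP: (sqrt_majorant_ge0_le1 R n).
have [l lim_l] := majorized_increments_cvg (sqrt_majorant_nondecreasing R)
  zeta_ub sqrt_iter_cauchy.
exists (1 - l); split.
- rewrite -expr2 -sqrrN opprB sqrrB1 (sqrt_lim_fix lim_l) expr2 opprD.
  by rewrite addrCA subrr addr0 addrC.
- by rewrite subKr; exact: sqrt_lim_le1 lim_l.
- by move=> y yt; rewrite mulrBr mulrBl mulr1 mul1r (sqrt_lim_comm lim_l yt).
- by move=> st; rewrite raddfB /= star1 (sqrt_lim_star lim_l st).
Qed.

End SquareRoot.

Lemma sa_complement a : star a = a -> rnorm a <= 1 ->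
  exists r, [/\ star r = r, a * r = r * a & a * a + r * r = 1].
Proof.
move=> sa a1; have saa : star (a * a) = a * a by rewrite starM sa.
have [r [rr _ r_comm r_sa]] := sqrt_one_sub (rnorm_sa_sqr_le1 sa a1).
exists r; split; first exact: r_sa.
- by apply: r_comm; rewrite mulrA.
- by rewrite rr addrC subrK.
Qed.

Lemma sa_abs a : star a = a -> rnorm a <= 1 -> exists c,
  [/\ star c = c, GRing.comm c a, c * c = a * a, rnorm c <= 1 & rnorm (1 - c) <= 1].
Proof.
move=> sa a1; have [r [sr ar ar1]] := sa_complement sa a1.
have [_ r1 _ _] := cos_sin_le1 sa sr ar ar1.
have srr : star (r * r) = r * r by rewrite starM sr.
have [c [cc c1 c_comm c_sa]] := sqrt_one_sub (rnorm_sa_sqr_le1 sr r1).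
have sc := c_sa srr.
have rc : r * c = c * r by apply: c_comm; rewrite mulrA.
have cr1 : c * c + r * r = 1 by rewrite cc subrK.
have [c_le1 _ _ _] := cos_sin_le1 sc sr (esym rc) cr1.
exists c; split => //.
- by apply/esym/c_comm; rewrite mulrA ar -mulrA ar mulrA.
- by rewrite cc -ar1 addrK.
Qed.

Lemma sa_mul_one_sub_le c : star c = c -> rnorm c <= 1 -> rnorm (1 - c) <= 1 ->
  rnorm (c * (1 - c)) <= 4^-1.
Proof.
move=> sc c1 c1'.
have [p [pp _ p_comm p_sa]] := sqrt_one_sub c1'.
have [q [qq _ q_comm q_sa]] := sqrt_one_sub c1.
rewrite subKr in pp.
have sp : star p = p by apply: p_sa; rewrite raddfB /= star1 sc.
have pq : p * q = q * p by apply: q_comm; rewrite -pp mulrA.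
have pq1 : p * p + q * q = 1 by rewrite pp qq addrC subrK.
have [_ _ _ pq2] := cos_sin_le1 sp (q_sa sc) pq pq1.
have -> : c * (1 - c) = (p * q) * (p * q).
  by rewrite -qq -pp !mulrA -(mulrA p q p) -pq mulrA.
apply: (le_trans (rnormM _ _)); rewrite rnormMn mulr2n in pq2.
by have := rnorm_ge0 (p * q); nra.
Qed.

Lemma sa_twice_sqr_sub1_le a : star a = a -> rnorm a <= 1 -> rnorm (a * a *+ 2 - 1) <= 1.
Proof.
move=> sa a1; have [r [sr ar ar1]] := sa_complement sa a1.
have [_ _ aarr _] := cos_sin_le1 sa sr ar ar1.
by rewrite -ar1 mulr2n addrKA.
Qed.

Lemma rnorm_mul_one_sub_abs a c : star a = a -> star c = c -> GRing.comm c a ->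
  c * c = a * a -> rnorm (a * (1 - c)) = rnorm (c * (1 - c)).
Proof.
move=> sa sc ca cc.
have s1c : star (1 - c) = 1 - c by rewrite raddfB /= star1 sc.
have a1c : GRing.comm a (1 - c) by rewrite /GRing.comm mulrBr mulrBl mulr1 mul1r ca.
have c1c : GRing.comm c (1 - c) by rewrite /GRing.comm mulrBr mulrBl mulr1 mul1r.
have sa1c : star (a * (1 - c)) = a * (1 - c) by rewrite starM s1c sa a1c.
have sc1c : star (c * (1 - c)) = c * (1 - c) by rewrite starM s1c sc c1c.
apply/eqP; rewrite -(eqrXn2 (n := 2)) ?rnorm_ge0 // -!rnorm_sa_sqr // -!expr2.
by rewrite !exprMn_comm // !expr2 cc.
Qed.

Lemma sqr_mulDB_eq0 a c : GRing.comm c a -> c * c = a * a -> (c + a) ^+ 2 * (c - a) ^+ 2 = 0.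
Proof.
move=> ca cc; rewrite !expr2 -mulrA (mulrA (c + a) (c - a)) mulrDB_comm //.
by rewrite !expr2 cc subrr mul0r mulr0.
Qed.

Lemma sqr_addB_orthogonal a c : star a = a -> star c = c -> GRing.comm c a ->
  c * c = a * a ->
  Defs.orthogonal mul star ((c + a) ^+ 2) ((c - a) ^+ 2) /\
  Defs.orthogonal mul star ((c - a) ^+ 2) ((c + a) ^+ 2).
Proof.
move=> sa sc ca cc.
have uv := sqr_mulDB_eq0 ca cc.
have vu : (c - a) ^+ 2 * (c + a) ^+ 2 = 0.
  by have := sqr_mulDB_eq0 (commrN ca) (etrans cc (esym (mulrNN a a))); rewrite opprK.
have su : star ((c + a) ^+ 2) = (c + a) ^+ 2 by rewrite !expr2 starM raddfD /= sa sc.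
have sv : star ((c - a) ^+ 2) = (c - a) ^+ 2 by rewrite !expr2 starM raddfB /= sa sc.
by rewrite /Defs.orthogonal su sv.
Qed.

Section OrderZeroMap.
Variables (B : completeNormedModType R[i]) (mulB : B -> B -> B) (starB : B -> B).
Hypothesis HB : is_Cstar_algebra mulB starB.
Variables (eps : R) (psi : A -> B).
Hypotheses (eps_ge0 : 0 <= eps) (psi_lin : is_Clinear psi).
Hypotheses (psi_bounded : is_bounded_map psi) (psi_star : forall x, psi (star x) = starB (psi x)).
Hypothesis psi_oz : eps_order_zero mul star mulB eps psi.

HB.instance Definition _ := GRing.isLinear.Build R[i] A B *:%R psi psi_lin.

Definition psi_sa_values : set R :=
  [set r | exists b, [/\ star b = b, rnorm b <= 1 & r = rnorm (psi b)]]%classic.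

Definition psi_sa_norm : R := sup psi_sa_values.

Local Notation N := psi_sa_norm.
Local Notation h := (rnorm (psi 1)).

Lemma psi_sa_values0 : psi_sa_values 0.
Proof. by exists 0; rewrite raddf0 raddf0 !rnorm0 ler01. Qed.

Lemma psi_sa_values_ub : has_ubound psi_sa_values.
Proof.
have [M psiM] := psi_bounded; exists `|M| => _ [b [_ b1 ->]].
apply: (le_trans (psiM b)); apply: (le_trans (ler_wpM2r (rnorm_ge0 b) (ler_norm M))).
by rewrite -[X in _ <= X]mulr1 ler_wpM2l.
Qed.

Lemma psi_sa_norm_ge0 : 0 <= N.
Proof. exact: (ub_le_sup psi_sa_values_ub psi_sa_values0). Qed.

Lemma psi_sa_le b : star b = b -> rnorm b <= 1 -> rnorm (psi b) <= N.
Proof. by move=> sb b1; apply: (ub_le_sup psi_sa_values_ub); exists b. Qed.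

Lemma psi_sa_le_mul b : star b = b -> rnorm (psi b) <= N * rnorm b.
Proof.
move=> sb; have [b0|b_neq0] := eqVneq (rnorm b) 0.
  by rewrite (rnorm_eq0 b0) raddf0 !rnorm0 mulr0.
have b_gt0 : 0 < rnorm b by rewrite lt_def b_neq0 rnorm_ge0.
set k := (rnorm b)^-1.
have k_gt0 : 0 < k by rewrite invr_gt0.
have skb : star (k%:C%C *: b) = k%:C%C *: b by rewrite starZ conjc_real sb.
have kb1 : rnorm (k%:C%C *: b) <= 1 by rewrite rnormZr gtr0_norm // mulVf.
have := psi_sa_le skb kb1; rewrite linearZZ rnormZr gtr0_norm //.
by move/(ler_wpM2l (rnorm_ge0 b)); rewrite mulrA /k divff // mul1r mulrC.
Qed.

Lemma opnorm_le_twice : opnorm psi <= N *+ 2.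
Proof.
apply: ge_sup; first by exists 0, 0; rewrite raddf0 !rnorm0 ler01.
move=> _ [x [x1 ->]].
pose y := 'i%C *: (star x - x).
have sy : star y = y by rewrite /y starZ conjc_i raddfB /= starK scaleNr -scalerN opprB.
have sx : star (x + star x) = x + star x by rewrite raddfD /= starK addrC.
have x2 : x *+ 2 = (x + star x) + 'i%C *: y.
  by rewrite /y scalerA mulcii scaleN1r opprB addrACA subrr addr0 mulr2n.
have n1 : rnorm (x + star x) <= 2.
  by have := rnormD x (star x); rewrite (cs_rnorm_star HA); lra.
have n2 : rnorm y <= 2.
  by rewrite rnormZi; have := rnormB (star x) x; rewrite (cs_rnorm_star HA); lra.
have psix : rnorm (psi x) *+ 2 <= rnorm (psi (x + star x)) + rnorm (psi y).
  have psi2x : psi x *+ 2 = psi (x + star x) + 'i%C *: psi y.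
    by rewrite -raddfMn x2 raddfD /= linearZ.
  by rewrite -rnormMn psi2x; apply: (le_trans (rnormD _ _)); rewrite rnormZi.
have := psi_sa_le_mul sx; have := psi_sa_le_mul sy; have := psi_sa_norm_ge0.
by rewrite mulr2n in psix *; nra.
Qed.

Lemma psi_sa_sqr_le a : star a = a -> rnorm a <= 1 -> rnorm (psi (a * a)) *+ 2 <= N + h.
Proof.
move=> sa a1.
have sd : star (a * a *+ 2 - 1) = a * a *+ 2 - 1.
  by rewrite raddfB /= raddfMn /= starM sa star1.
rewrite -rnormMn -raddfMn -[a * a *+ 2](subrK 1) raddfD /=.
apply: (le_trans (rnormD _ _)); rewrite lerD2r.
exact: psi_sa_le sd (sa_twice_sqr_sub1_le sa a1).
Qed.

Lemma psi_cross_sqr_le a c : star a = a -> star c = c -> GRing.comm c a ->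
  c * c = a * a -> rnorm a <= 1 -> rnorm c <= 1 ->
  rnorm (psi (c * a)) ^+ 2 <= rnorm (psi (a * a)) ^+ 2 + 4 * eps.
Proof.
move=> sa sc ca cc a1 c1.
have [ouv ovu] := sqr_addB_orthogonal sa sc ca cc.
set u := (c + a) ^+ 2 in ouv ovu *; set v := (c - a) ^+ 2 in ouv ovu *.
have spa : star (c + a) = c + a by rewrite raddfD /= sa sc.
have sma : star (c - a) = c - a by rewrite raddfB /= sa sc.
have pu : is_positive mul star u by exists (c + a); rewrite spa.
have pv : is_positive mul star v by exists (c - a); rewrite sma.
have spu : starB (psi u) = psi u by rewrite -psi_star /u expr2 starM spa.
have spv : starB (psi v) = psi v by rewrite -psi_star /v expr2 starM sma.
have sqr_le4 x : rnorm x <= 2 -> rnorm (x ^+ 2) <= 4.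
  move=> x2; apply: (le_trans (rnormM _ _)).
  by have := ler_pM (rnorm_ge0 x) (rnorm_ge0 x) x2 x2; lra.
have u4 : rnorm u <= 4 by apply: sqr_le4; have := rnormD c a; lra.
have v4 : rnorm v <= 4 by apply: sqr_le4; have := rnormB c a; lra.
have eps_le x y : rnorm x <= 4 -> rnorm y <= 4 -> eps * rnorm x * rnorm y <= 16 * eps.
  move=> x4 y4; rewrite -mulrA mulrC ler_wpM2r //.
  by have := ler_pM (rnorm_ge0 x) (rnorm_ge0 y) x4 y4; lra.
have diff : psi u - psi v = psi (c * a) *+ 4.
  by rewrite -raddfB subr_sqrDB_comm // raddfMn.
have sum : psi u + psi v = psi (a * a) *+ 4.
  have cc2 : c ^+ 2 = a ^+ 2 := cc.
  by rewrite -raddfD addr_sqrDB_comm // cc2 -mulr2n -mulrnA raddfMn.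
have := cs_sa_rnormB_sqr HB spu spv; rewrite diff sum !rnormMn.
have sqr4 (r : R) : (r *+ 4) ^+ 2 = 16 * r ^+ 2 by rewrite -[r *+ 4]mulr_natl exprMn -natrX.
have := le_trans (psi_oz pu pv ouv) (eps_le _ _ u4 v4).
have := le_trans (psi_oz pv pu ovu) (eps_le _ _ v4 u4).
by rewrite !sqr4 mulr2n; lra.
Qed.

Lemma psi_sa_contraction_le a : star a = a -> rnorm a <= 1 ->
  rnorm (psi a) <= N / 4 + Num.sqrt (((N + h) / 2) ^+ 2 + 4 * eps).
Proof.
move=> sa a1; have [c [sc ca cc c1 c1']] := sa_abs sa a1.
have -> : a = a * (1 - c) + c * a by rewrite mulrBr mulr1 ca subrK.
rewrite raddfD /=; apply: (le_trans (rnormD _ _)); apply: lerD.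
  have s : star (a * (1 - c)) = a * (1 - c).
    by rewrite starM raddfB /= star1 sc sa mulrBl mulrBr mul1r mulr1 ca.
  apply: (le_trans (psi_sa_le_mul s)); rewrite rnorm_mul_one_sub_abs //.
  by rewrite ler_wpM2l ?psi_sa_norm_ge0 ?sa_mul_one_sub_le.
rewrite -(ger0_norm (rnorm_ge0 (psi (c * a)))) -sqrtr_sqr; apply: ler_wsqrtr.
apply: (le_trans (psi_cross_sqr_le sa sc ca cc a1 c1)); rewrite lerD2r.
have := psi_sa_sqr_le sa a1; have := rnorm_ge0 (psi (a * a)).
by rewrite mulr2n; nra.
Qed.

Lemma psi_sa_norm_le : N <= N / 4 + Num.sqrt (((N + h) / 2) ^+ 2 + 4 * eps).
Proof.
apply: ge_sup; first by exists 0; exact: psi_sa_values0.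
by move=> _ [b [sb b1 ->]]; exact: psi_sa_contraction_le.
Qed.

Lemma opnorm_dichotomy :
  opnorm psi <= Num.sqrt (243 * eps) \/ opnorm psi <= 243 * h.
Proof.
have [small|large] := self_bound_dichotomy psi_sa_norm_ge0 (rnorm_ge0 _) eps_ge0 psi_sa_norm_le.
- by left; exact: le_trans opnorm_le_twice small.
- by right; exact: le_trans opnorm_le_twice large.
Qed.

End OrderZeroMap.

End UnitalCstarAlgebra.

Theorem corollary6p5 (R : realType) :
  exists K : R, 0 <= K /\
  forall (A : completeNormedModType R[i]) (mulA : A -> A -> A) (starA : A -> A)
         (oneA : A)
         (B : completeNormedModType R[i]) (mulB : B -> B -> B) (starB : B -> B)
         (eps : R) (psi : A -> B),
    is_Cstar_algebra mulA starA -> is_unit_elt mulA oneA ->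
    is_Cstar_algebra mulB starB ->
    0 <= eps ->
    is_Clinear psi -> is_bounded_map psi ->
    (forall x, psi (starA x) = starB (psi x)) ->
    eps_order_zero mulA starA mulB eps psi ->
    opnorm psi <= Num.sqrt ((K + 2) ^+ 5 * eps) \/
    opnorm psi <= (K + 2) ^+ 5 * rnorm (psi oneA).
Proof.
exists 1; split; first exact: ler01.
move=> A mulA starA oneA B mulB starB eps psi HA Hone HB eps0 lin bnd psi_star oz.
have -> : ((1 : R) + 2) ^+ 5 = 243 by ring.
exact: (opnorm_dichotomy HA Hone HB eps0 lin bnd psi_star oz).
Qed.
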